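(* Assume the standing setup below. Then for every phase change number $s_i$ of $X$ with $i\ge 1$, the function $\pi_0V_{s_i}(X)\to\pi_0V_{s_i}(Y)$, $[x]_{s_i,X}\mapsto[x]_{s_i,Y}$, induced by the inclusion $X\subseteq Y$, is a bijection.
   Context: For a finite set $Z\subset\mathbb{R}^n$ and a real number $s\ge 0$, the Vietoris–Rips complex $V_s(Z)$ is the simplicial complex with vertex set $Z$ whose simplices are the nonempty subsets $\sigma\subseteq Z$ with $d(z,z')\le s$ for all $z,z'\in\sigma$ ($d$ the Euclidean distance). For $z\in Z$, $[z]_{s,Z}\subseteq Z$ denotes the set of vertices of the path component of $V_s(Z)$ containing $z$, and $\pi_0V_s(Z)$ is the set of path components. Standing setup: $X\subset\mathbb{R}^n$ is a finite set with at least two points, $y\in\mathbb{R}^n\setminus X$, $Y=X\sqcup\{y\}$. The phase change numbers of $X$ are the distinct values $0=s_0<s_1<\dots<s_k$ of $d(x,x')$ for $x,x'\in X$. There are $x_0\in X$ and a real $r>0$ with $d(y,x_0)<r$ and $r<s_{i+1}-s_i$ for all $0\le i<k$. *)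

From Stdlib Require Export Reals List Relations.
Open Scope R_scope.

(* A point of R^n is a list of n reals (length hypotheses are stated explicitly). *)
Definition point := list R.

Definition dist (p q : point) : R :=
  sqrt (fold_right Rplus 0 (map (fun ab => (fst ab - snd ab) ^ 2) (combine p q))).

(* Edge relation of the 1-skeleton of the Vietoris-Rips complex V_s(Z). *)
Definition vr_edge (s : R) (Z : list point) (u v : point) : Prop :=
  In u Z /\ In v Z /\ dist u v <= s.

(* [z]_{s,Z}: vertex set of the path component of V_s(Z) containing z. *)
Definition component (s : R) (Z : list point) (z : point) : point -> Prop :=
  fun w => In w Z /\ clos_refl_trans point (vr_edge s Z) z w.

(* pi_0 V_s(Z): the set of path components (as vertex sets). *)
Definition pi0 (s : R) (Z : list point) : Type :=
  { C : point -> Prop | exists z, In z Z /\ C = component s Z z }.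

(* sl = [s_0; ...; s_k] is the strictly increasing list of the distinct values
   of d(x,x') for x,x' in X (the phase change numbers of X). *)
Definition phase_change_list (X : list point) (sl : list R) : Prop :=
  (forall i, (S i < length sl)%nat -> nth i sl 0 < nth (S i) sl 0) /\
  (forall t, In t sl <-> exists x x', In x X /\ In x' X /\ t = dist x x').

From Stdlib Require Import Lra Psatz ProofIrrelevance FunctionalExtensionality PropExtensionality.

(* 1. Euclidean distance is symmetric and satisfies the triangle inequality.
   2. Key estimate: if u in X has d(u,y) <= s_i, then d(u,x0) <= s_i.  Indeed
      d(u,x0) < s_i + r < s_{i+1} and d(u,x0) is itself a phase change number,
      so it is at most s_i.  Also r < s_1 <= s_i, hence y and x0 are adjacent.
   3. Graph side: the map y |-> x0 (identity on X) sends edges of V_s(y::X) to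
      edges or loops of V_s(X) under the estimate of step 2, so two points of X
      connected in V_s(y::X) are already connected in V_s(X).
   4. The map on components sends a component C of V_s(X) to its saturation in
      V_s(y::X); it maps [x]_X to [x]_{y::X}.  Step 3 gives injectivity, and
      surjectivity holds since [y]_{y::X} = [x0]_{y::X}. *)

Definition sqdist (p q : point) : R :=
  fold_right Rplus 0 (map (fun ab => (fst ab - snd ab) ^ 2) (combine p q)).

Lemma sqdist_cons a p b q : sqdist (a :: p) (b :: q) = (a - b) ^ 2 + sqdist p q.
Proof. reflexivity. Qed.

Lemma sqdist_nonneg p q : 0 <= sqdist p q.
Proof.
  revert q; induction p as [|a p IH]; intros [|b q]; try (unfold sqdist; simpl; lra).
  rewrite sqdist_cons. pose proof (IH q). pose proof (pow2_ge_0 (a - b)). lra.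
Qed.

Lemma sqdist_sym p q : sqdist p q = sqdist q p.
Proof.
  revert q; induction p as [|a p IH]; intros [|b q]; try reflexivity.
  rewrite !sqdist_cons, IH. f_equal. ring.
Qed.

Lemma dist_sym p q : dist p q = dist q p.
Proof. exact (f_equal sqrt (sqdist_sym p q)). Qed.

Lemma planar_minkowski p q u v : 0 <= p -> 0 <= q -> 0 <= u -> 0 <= v ->
  sqrt ((p + q) ^ 2 + (u + v) ^ 2) <= sqrt (p ^ 2 + u ^ 2) + sqrt (q ^ 2 + v ^ 2).
Proof.
  intros. set (a := sqrt (p ^ 2 + u ^ 2)); set (b := sqrt (q ^ 2 + v ^ 2)).
  assert (ha : 0 <= a) by apply sqrt_pos. assert (hb : 0 <= b) by apply sqrt_pos.
  assert (ea : a * a = p ^ 2 + u ^ 2) by (apply sqrt_sqrt; nra).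
  assert (eb : b * b = q ^ 2 + v ^ 2) by (apply sqrt_sqrt; nra).
  assert (cauchy_schwarz : p * q + u * v <= a * b).
  { unfold a, b. rewrite <- sqrt_mult by nra.
    rewrite <- (sqrt_square (p * q + u * v)) by nra. apply sqrt_le_1_alt.
    pose proof (pow2_ge_0 (p * v - q * u)). simpl in *. nra. }
  rewrite <- (sqrt_square (a + b)) by lra. apply sqrt_le_1_alt. nra.
Qed.

(* The triangle inequality, by induction on the dimension: one coordinate is
   split off and the two resulting planar vectors are compared by Minkowski. *)
Lemma dist_triangle a b c : length a = length b -> length b = length c ->
  dist a c <= dist a b + dist b c.
Proof.
  unfold dist; fold (sqdist a c) (sqdist a b) (sqdist b c).
  revert b c; induction a as [|x a IH]; intros [|y b] [|z c] Hab Hbc;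
    simpl in Hab, Hbc; try discriminate.
  - unfold sqdist; simpl. rewrite sqrt_0. lra.
  - injection Hab as Hab; injection Hbc as Hbc. specialize (IH b c Hab Hbc).
    rewrite !sqdist_cons.
    pose proof (sqdist_nonneg a b); pose proof (sqdist_nonneg b c); pose proof (sqdist_nonneg a c).
    assert (sq_abs : forall t, t ^ 2 = Rabs t ^ 2) by (intro t; now rewrite pow2_abs).
    assert (sq_sqrt : forall t, 0 <= t -> t = sqrt t ^ 2).
    { intros t Ht. simpl. rewrite Rmult_1_r. now rewrite sqrt_sqrt. }
    rewrite (sq_abs (x - y)), (sq_abs (y - z)), (sq_sqrt (sqdist a b)), (sq_sqrt (sqdist b c)) by auto.
    eapply Rle_trans;
      [| apply planar_minkowski; auto using Rabs_pos, sqrt_pos].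
    apply sqrt_le_1_alt.
    assert (Rabs (x - z) <= Rabs (x - y) + Rabs (y - z)).
    { replace (x - z) with ((x - y) + (y - z)) by ring. apply Rabs_triang. }
    pose proof (Rabs_pos (x - z)); pose proof (Rabs_pos (x - y)); pose proof (Rabs_pos (y - z)).
    pose proof (sqrt_pos (sqdist a c)); pose proof (sqrt_pos (sqdist a b));
      pose proof (sqrt_pos (sqdist b c)).
    rewrite (sq_abs (x - z)), (sq_sqrt (sqdist a c)) by auto. simpl. nra.
Qed.

Lemma increasing_nth_le (sl : list R) :
  (forall i, (S i < length sl)%nat -> nth i sl 0 < nth (S i) sl 0) ->
  forall j k, (j <= k)%nat -> (k < length sl)%nat -> nth j sl 0 <= nth k sl 0.
Proof.
  intros Hinc j k Hjk Hk. induction Hjk as [|k Hjk IH]; [lra|].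
  pose proof (Hinc k Hk). pose proof (IH ltac:(lia)). lra.
Qed.

Lemma increasing_member_le (sl : list R) t i :
  (forall i, (S i < length sl)%nat -> nth i sl 0 < nth (S i) sl 0) ->
  In t sl -> (i < length sl)%nat ->
  ((S i < length sl)%nat -> t < nth (S i) sl 0) -> t <= nth i sl 0.
Proof.
  intros Hinc Ht Hi Hnext. destruct (In_nth _ _ 0 Ht) as [j [Hj <-]].
  destruct (Nat.le_gt_cases j i) as [Hji | Hij].
  - now apply increasing_nth_le.
  - pose proof (increasing_nth_le sl Hinc (S i) j Hij Hj).
    pose proof (Hnext ltac:(lia)). lra.
Qed.

Lemma phase_nonneg X sl t : phase_change_list X sl -> In t sl -> 0 <= t.
Proof. intros [_ Hsl] Ht. apply Hsl in Ht as [a [b [_ [_ ->]]]]. apply sqrt_pos. Qed.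

(* Every positive phase change number exceeds r when consecutive phase change
   numbers are more than r apart, since s_1 > s_0 + r >= r. *)
Lemma gap_below_phase X sl r i : phase_change_list X sl ->
  (forall i, (S i < length sl)%nat -> r < nth (S i) sl 0 - nth i sl 0) ->
  (1 <= i < length sl)%nat -> r < nth i sl 0.
Proof.
  intros Hphases Hgap Hi. pose proof (Hgap 0%nat ltac:(lia)).
  pose proof (phase_nonneg X sl _ Hphases (nth_In sl 0 (n := 0%nat) ltac:(lia))).
  pose proof (increasing_nth_le sl (proj1 Hphases) 1 i ltac:(lia) ltac:(lia)). lra.
Qed.

(* The key estimate: a neighbour u in X of y at scale s_i is a neighbour of x0,
   because d(u,x0) <= d(u,y) + d(y,x0) < s_i + r < s_{i+1} is a phase change number. *)
Lemma neighbour_of_y_near_x0 n X y x0 r sl i u :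
  Forall (fun p => length p = n) X -> length y = n -> phase_change_list X sl ->
  In x0 X -> dist y x0 < r ->
  (forall i, (S i < length sl)%nat -> r < nth (S i) sl 0 - nth i sl 0) ->
  (i < length sl)%nat -> In u X -> dist u y <= nth i sl 0 -> dist u x0 <= nth i sl 0.
Proof.
  intros HdimX Hdimy [Hinc Hsl] Hx0 Hyx0 Hgap Hi Hu Hd.
  assert (Hlen : forall p, In p X -> length p = n) by (apply Forall_forall, HdimX).
  apply (increasing_member_le sl _ i Hinc); auto.
  - apply Hsl. eauto.
  - intros HSi. pose proof (Hgap i HSi).
    assert (Huy : length u = length y) by (rewrite Hdimy; auto).
    assert (Hyx0' : length y = length x0) by (rewrite Hdimy, Hlen; auto).
    pose proof (dist_triangle u y x0 Huy Hyx0'). lra.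
Qed.

Notation connected s Z := (clos_refl_trans point (vr_edge s Z)).

Lemma vr_edge_sym s Z u v : vr_edge s Z u v -> vr_edge s Z v u.
Proof. intros [Hu [Hv Hd]]. repeat split; auto. now rewrite dist_sym. Qed.

Lemma connected_sym s Z a b : connected s Z a b -> connected s Z b a.
Proof.
  induction 1; [apply rt_step, vr_edge_sym | apply rt_refl | eapply rt_trans]; eauto.
Qed.

Lemma connected_incl s Z Z' a b : incl Z Z' -> connected s Z a b -> connected s Z' a b.
Proof.
  intros HZ. induction 1 as [a b [Ha [Hb Hd]]| |]; [| apply rt_refl | eapply rt_trans; eauto].
  apply rt_step. repeat split; auto.
Qed.

Lemma component_eq s Z a b : connected s Z a b -> component s Z a = component s Z b.
Proof.
  intros Hab. apply functional_extensionality; intro w. apply propositional_extensionality.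
  unfold component; split; intros [Hw Hc]; split; auto; eapply rt_trans; eauto.
  now apply connected_sym.
Qed.

Lemma component_eq_connected s Z a b : In a Z ->
  component s Z a = component s Z b -> connected s Z b a.
Proof.
  intros Ha E. assert (Hm : component s Z b a) by (rewrite <- E; split; auto; apply rt_refl).
  exact (proj2 Hm).
Qed.

Lemma pi0_ext s Z (a b : pi0 s Z) : proj1_sig a = proj1_sig b -> a = b.
Proof. destruct a, b; simpl; intros ->. f_equal. apply proof_irrelevance. Qed.

Definition retract (y x0 p : point) : point :=
  if list_eq_dec Req_EM_T p y then x0 else p.

(* If every neighbour in X of y is a neighbour of x0, the retraction maps
   paths of V_s(y::X) to paths of V_s(X); so removing y does not disconnect X. *)
Lemma connected_remove_vertex s X y x0 a b :
  ~ In y X -> In x0 X -> (forall u, In u X -> dist u y <= s -> dist u x0 <= s) ->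
  In a X -> In b X -> connected s (y :: X) a b -> connected s X a b.
Proof.
  intros Hy Hx0 Hnb Ha Hb Hab.
  assert (Hfix : forall p, In p X -> retract y x0 p = p).
  { intros p Hp. unfold retract. destruct (list_eq_dec Req_EM_T p y); congruence. }
  rewrite <- (Hfix a Ha), <- (Hfix b Hb). clear Ha Hb.
  induction Hab as [a b [Ha [Hb Hd]]| |]; [| apply rt_refl | eapply rt_trans; eauto].
  unfold retract.
  destruct (list_eq_dec Req_EM_T a y) as [->|na], (list_eq_dec Req_EM_T b y) as [->|nb].
  - apply rt_refl.
  - destruct Hb as [->|Hb]; [congruence|].
    apply rt_step. repeat split; auto. rewrite dist_sym. apply Hnb; auto. now rewrite dist_sym.
  - destruct Ha as [->|Ha]; [congruence|]. apply rt_step. repeat split; auto.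
  - destruct Ha as [->|Ha]; [congruence|]; destruct Hb as [->|Hb]; [congruence|].
    apply rt_step. repeat split; auto.
Qed.

Definition saturate (s : R) (Z' : list point) (C : point -> Prop) : point -> Prop :=
  fun w => In w Z' /\ exists z, C z /\ connected s Z' z w.

Lemma saturate_component s Z Z' x : incl Z Z' -> In x Z ->
  saturate s Z' (component s Z x) = component s Z' x.
Proof.
  intros HZ Hx. apply functional_extensionality; intro w. apply propositional_extensionality.
  unfold saturate, component; split.
  - intros [Hw [z [[_ Hxz] Hzw]]]. split; auto.
    eapply rt_trans; [eapply connected_incl|]; eauto.
  - intros [Hw Hxw]. split; auto. exists x. repeat split; auto. apply rt_refl.
Qed.

Definition pi0_incl (s : R) (Z Z' : list point) (HZ : incl Z Z') (C : pi0 s Z) : pi0 s Z'.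
Proof.
  refine (exist _ (saturate s Z' (proj1_sig C)) _).
  destruct C as [C [z [Hz ->]]]. exists z. split; [now apply HZ|].
  now apply saturate_component.
Defined.

Lemma pi0_incl_component s Z Z' (HZ : incl Z Z') (C : pi0 s Z) x :
  In x Z -> proj1_sig C = component s Z x -> proj1_sig (pi0_incl s Z Z' HZ C) = component s Z' x.
Proof. intros Hx E. simpl. rewrite E. now apply saturate_component. Qed.

Theorem corollary12 (n : nat) (X : list point) (y x0 : point) (r : R) (sl : list R) :
  NoDup X -> (2 <= length X)%nat ->
  Forall (fun p => length p = n) X -> length y = n -> ~ In y X ->
  phase_change_list X sl ->
  In x0 X -> 0 < r -> dist y x0 < r ->
  (forall i, (S i < length sl)%nat -> r < nth (S i) sl 0 - nth i sl 0) ->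
  forall i, (1 <= i < length sl)%nat ->
    exists f : pi0 (nth i sl 0) X -> pi0 (nth i sl 0) (y :: X),
      (forall (C : pi0 (nth i sl 0) X) (x : point), In x X ->
         proj1_sig C = component (nth i sl 0) X x ->
         proj1_sig (f C) = component (nth i sl 0) (y :: X) x) /\
      (forall a b, f a = f b -> a = b) /\
      (forall c, exists a, f a = c).
Proof.
  intros _ _ HdimX Hdimy Hy Hphases Hx0 _ Hyx0 Hgap i Hi.
  set (s := nth i sl 0).
  assert (Hnb : forall u, In u X -> dist u y <= s -> dist u x0 <= s).
  { intros u. apply (neighbour_of_y_near_x0 n X y x0 r sl); auto; lia. }
  assert (Hrs : r < s) by (apply (gap_below_phase X sl r); auto).
  set (HZ := incl_tl y (incl_refl X)).
  exists (pi0_incl s X (y :: X) HZ). split; [|split].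
  - apply pi0_incl_component.
  - intros [a [xa [Ha ->]]] [b [xb [Hb ->]]] E. apply pi0_ext; simpl.
    apply (f_equal (@proj1_sig _ _)) in E; simpl in E.
    rewrite !saturate_component in E by auto.
    apply component_eq_connected in E; [|now right].
    symmetry. apply component_eq, (connected_remove_vertex s X y x0); auto.
  - intros [c Hc].
    assert (Hx : exists x, In x X /\ c = component s (y :: X) x).
    { destruct Hc as [z [[<-|Hz] ->]]; [|eauto].
      exists x0. split; auto. apply component_eq, rt_step. repeat split; simpl; auto; lra. }
    destruct Hx as [x [Hx Ec]].
    exists (exist _ (component s X x) (ex_intro _ x (conj Hx eq_refl))).
    apply pi0_ext. rewrite Ec. now apply pi0_incl_component.
Qed.
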